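(* Let $D$ be a strongly connected orientation of a subgraph of $G$, and let $\mathcal S_D$ be the set of strongly connected orientations $D'$ of $G^\circ$ ($G$ with its bridges deleted) with $D\subseteq D'$. For $D'\in\mathcal S_D$ let $v^{D'}$ be the unique point of $H$ with $2\langle v^{D'},x^C\rangle=q(x^C)$ for all circuits $C\subseteq D'$. Then $F=\mathrm{conv}\{v^{D'}: D'\in\mathcal S_D\}$ is a face of $V_O$, and $\phi(F)=D$, where $\phi(F)=\bigcup\{\mathrm{supp}(\lambda): \lambda\in\Xi_1,\ F\subseteq H_\lambda\}$. In particular the map $\phi$ from faces of $V_O$ to strongly connected orientations of subgraphs of $G$ is surjective.
   Context: $G=(V,E)$ is a finite connected graph, possibly with parallel edges and loops; $\mathbb E$ is the set of oriented edges ($e$ and its reverse $\bar e$). Real $1$-chains $x:\mathbb E\to\mathbb R$ satisfy $x_{\bar e}=-x_e$; $\langle x,y\rangle=\sum_{e\in E}x_ey_e$, $q(x)=\langle x,x\rangle$. A flow satisfies $\sum_{e\text{ with tail }v}x_e=0$ at every vertex $v$; $H$ is the space of real flows and $\Lambda$ the lattice of integer flows. $V_O=\{x\in H: q(x)\le q(x-\mu)\ \forall\mu\in\Lambda\}$. For a flow $x$, $\mathrm{supp}(x)=\{e\in\mathbb E: x_e>0\}$. A circuit is an orientation of a cycle as a directed cycle; $x^C_e=1$ if $e\in C$, $-1$ if $\bar e\in C$, $0$ otherwise. $\Xi_1=\{x^C: C\text{ a circuit}\}$; for $\lambda\in\Xi_1$, $H_\lambda=\{x\in H: 2\langle x,\lambda\rangle=q(\lambda)\}$.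 An orientation of a subgraph (a set of oriented edges containing exactly one of $e,\bar e$ for each edge of the subgraph) is strongly connected if on each connected component any two vertices are joined by directed paths in both directions. *)

From HB Require Import structures.
From mathcomp Require Import all_boot all_order all_algebra.
Set Implicit Arguments. Unset Strict Implicit. Unset Printing Implicit Defensive.
Import Order.TTheory GRing.Theory Num.Theory.
Local Open Scope ring_scope.

(* A finite graph (parallel edges, loops allowed): vertices V, edges E, each
   edge e has a reference orientation from [t e] to [h e].  The oriented edges
   are E * bool: (e,true) = e, (e,false) = reverse of e. *)

Section Graph.
Variables (V E : finType) (t h : E -> V).

Definition otail (o : E * bool) : V := if o.2 then t o.1 else h o.1.
Definition ohead (o : E * bool) : V := if o.2 then h o.1 else t o.1.

Definition adjG : rel V := fun u v =>
  [exists e, ((t e == u) && (h e == v)) || ((t e == v) && (h e == u))].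
Definition adjG_minus (e0 : E) : rel V := fun u v =>
  [exists e, (e != e0) && (((t e == u) && (h e == v)) || ((t e == v) && (h e == u)))].

Definition graph_connected : Prop := forall u v, connect adjG u v.

Definition bridge (e : E) : bool := ~~ connect (adjG_minus e) (t e) (h e).

(* a set of oriented edges containing at most one of e, \bar e for each e:
   an orientation of the subgraph formed by the underlying edges *)
Definition is_orientation (D : {set E * bool}) : Prop :=
  forall e, ~~ (((e, true) \in D) && ((e, false) \in D)).

Definition dirrel (D : {set E * bool}) : rel V := fun u v =>
  [exists o in D, (otail o == u) && (ohead o == v)].
Definition undrel (D : {set E * bool}) : rel V := fun u v =>
  dirrel D u v || dirrel D v u.

Definition strongly_connected (D : {set E * bool}) : Prop :=
  is_orientation D /\ forall u v, connect (undrel D) u v -> connect (dirrel D) u v.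

Definition orientation_of_Gcirc (D : {set E * bool}) : Prop :=
  is_orientation D /\ forall e, (((e, true) \in D) || ((e, false) \in D)) = ~~ bridge e.

(* circuits: orientations of cycles as directed cycles *)
Definition is_circuit (C : {set E * bool}) : Prop :=
  exists s : seq (E * bool),
    [/\ s != [::], uniq (map fst s), uniq (map otail s),
        cycle (fun o1 o2 => ohead o1 == otail o2) s & C = [set o in s]].

Variable R : realFieldType.

(* real 1-chains, given by their values on the reference orientations *)
Definition oval (x : {ffun E -> R}) (o : E * bool) : R :=
  if o.2 then x o.1 else - x o.1.

Definition dot (x y : {ffun E -> R}) : R := \sum_e x e * y e.
Definition q (x : {ffun E -> R}) : R := dot x x.

Definition is_flow (x : {ffun E -> R}) : Prop :=
  forall v, \sum_(e | t e == v) x e - \sum_(e | h e == v) x e = 0.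

Definition intc (m : {ffun E -> int}) : {ffun E -> R} := [ffun e => (m e)%:~R].
Definition subc (x y : {ffun E -> R}) : {ffun E -> R} := [ffun e => x e - y e].

Definition VO (x : {ffun E -> R}) : Prop :=
  is_flow x /\ forall m : {ffun E -> int}, is_flow (intc m) -> q x <= q (subc x (intc m)).

Definition xC (C : {set E * bool}) : {ffun E -> R} :=
  [ffun e => if (e, true) \in C then 1 else if (e, false) \in C then -1 else 0].

Definition Xi1 (lam : {ffun E -> R}) : Prop := exists C, is_circuit C /\ lam = xC C.

Definition Hlam (lam x : {ffun E -> R}) : Prop := is_flow x /\ 2 * dot x lam = q lam.

Definition phi (F : {ffun E -> R} -> Prop) (o : E * bool) : Prop :=
  exists lam, [/\ Xi1 lam, (forall x, F x -> Hlam lam x) & 0 < oval lam o].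

Definition is_vD (D' : {set E * bool}) (v : {ffun E -> R}) : Prop :=
  is_flow v /\ forall C, is_circuit C -> C \subset D' -> 2 * dot v (xC C) = q (xC C).

Definition in_SD (D D' : {set E * bool}) : Prop :=
  [/\ strongly_connected D', orientation_of_Gcirc D' & D \subset D'].

Definition conv (P : {ffun E -> R} -> Prop) (x : {ffun E -> R}) : Prop :=
  exists n (p : 'I_n -> {ffun E -> R}) (w : 'I_n -> R),
    [/\ forall i, P (p i), forall i, 0 <= w i, \sum_i w i = 1
      & forall e, x e = \sum_i w i * p i e].

Definition FD (D : {set E * bool}) : {ffun E -> R} -> Prop :=
  conv (fun v => exists D', in_SD D D' /\ is_vD D' v).

Definition is_face (K F : {ffun E -> R} -> Prop) : Prop :=
  exists (a : {ffun E -> R}) (b : R),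
    (forall x, K x -> dot a x <= b) /\ (forall x, F x <-> K x /\ dot a x = b).

End Graph.

(* Circuits are handled through closed walks: sequences of arcs (oriented
   edges) in which each arc starts where the previous one ends.  The proof
   has five parts.
   1. Combinatorics of walks: every arc of a strongly connected orientation D
      lies on a circuit inside D, an edge lies on a circuit iff it is not a
      bridge, and (ear extension) D extends to a strongly connected
      orientation of G°, i.e. S_D is never empty.
   2. Potentials: a cost function on a set of arcs with no negative closed
      walk admits a potential p with p(head) <= p(tail) + cost.  With cost
      1 - 2<x, arc> this gives the circuit description of the Voronoi cell:
      V_O = { flows x | 2<x,x^C> <= q(x^C) for every circuit C }.
   3. The points v^{D'}: they exist (orthogonal projection on the span of the
      circuits of D'), and for D' in S_D, x^{D'} - 2 v^{D'} is a potential
      difference, so 2<v^{D'}, f> = <x^{D'}, f> for every flow f; this gives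
      uniqueness and v^{D'} in V_O.
   4. Face: summing the circuit inequalities over the circuits C ⊆ D gives a
      supporting hyperplane of V_O.  A point of V_O tight on it lies in F_D, by
      descent on the number of non-tight circuits: either the arcs of the tight
      circuits form some D' in S_D and x = v^{D'}, or x moves in both
      directions along a flow orthogonal to all tight circuits, and is a
      convex combination of two points with strictly more tight circuits.
   5. phi(F_D) = D: arcs of D lie on circuits tight on F_D; conversely a
      circuit C tight on F_D through an arc o outside D would be violated at
      v^{D'} for some D' in S_D containing the reverse of o. *)

From Pilot Require Import Defs.
From HB Require Import structures.
From mathcomp Require Import all_boot all_order all_algebra.
From mathcomp Require Import ring lra zify.
From Stdlib Require Import Classical ClassicalEpsilon.
Import Order.TTheory GRing.Theory Num.Theory.
Set Implicit Arguments. Unset Strict Implicit. Unset Printing Implicit Defensive.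

Definition asbool (P : Prop) : bool :=
  if excluded_middle_informative P then true else false.

Lemma asboolP P : reflect P (asbool P).
Proof. by rewrite /asbool; case: excluded_middle_informative => H; constructor. Qed.

Section Walks.
Variables (V E : finType) (t h : E -> V).
Notation arc := (E * bool)%type.
Notation otail := (Defs.otail t h).
Notation ohead := (Defs.ohead t h).

Definition orev (o : arc) : arc := (o.1, ~~ o.2).

Lemma otail_rev o : otail (orev o) = ohead o. Proof. by case: o => e []. Qed.
Lemma ohead_rev o : ohead (orev o) = otail o. Proof. by case: o => e []. Qed.

Fixpoint walk (v : V) (s : seq arc) : bool :=
  if s is o :: s' then (otail o == v) && walk (ohead o) s' else true.
Definition wend (v : V) (s : seq arc) : V := last v (map ohead s).

Definition follows (o1 o2 : arc) : bool := ohead o1 == otail o2.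
Definition closed_walk (s : seq arc) : bool :=
  [&& s != [::], cycle follows s & uniq (map otail s)].
Definition simple_walk (v : V) (s : seq arc) : bool :=
  walk v s && uniq (v :: map ohead s).

Lemma walk_cat v s1 s2 : walk v (s1 ++ s2) = walk v s1 && walk (wend v s1) s2.
Proof. by elim: s1 v => //= o s1 IH v; rewrite IH andbA. Qed.

Lemma wend_cat v s1 s2 : wend v (s1 ++ s2) = wend (wend v s1) s2.
Proof. by rewrite /wend map_cat last_cat. Qed.

Lemma walk_rcons v s o : walk v (rcons s o) = walk v s && (otail o == wend v s).
Proof. by rewrite -cats1 walk_cat /= andbT. Qed.

Lemma wend_rcons v s o : wend v (rcons s o) = ohead o.
Proof. by rewrite /wend map_rcons last_rcons. Qed.

Lemma path_walk o s : path follows o s = walk (ohead o) s.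
Proof. by elim: s o => //= o1 s IH o; rewrite IH /follows eq_sym. Qed.

Lemma cycle_walk o s :
  cycle follows (o :: s) = walk (ohead o) s && (wend (ohead o) s == otail o).
Proof. by rewrite /= path_walk walk_rcons eq_sym. Qed.

Lemma otails_walk v s : walk v s -> map otail s = belast v (map ohead s).
Proof. by elim: s v => //= o s IH v /andP[/eqP -> Hw]; rewrite (IH _ Hw). Qed.

Lemma mem_walk v s o : walk v s -> o \in s ->
  (otail o \in v :: map ohead s) && (ohead o \in map ohead s).
Proof.
move=> Hw Ho; rewrite (map_f _ Ho) andbT; apply: mem_belast.
by rewrite -(otails_walk Hw) (map_f _ Ho).
Qed.

Lemma closed_walk_cons o s :
  closed_walk (o :: s) -> walk (ohead o) s /\ wend (ohead o) s = otail o.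
Proof. by rewrite /closed_walk cycle_walk => /and3P[_ /andP[-> /eqP ->]]. Qed.

Lemma closed_walk_of_simple a s o :
  simple_walk a s -> wend a s = otail o -> ohead o = a -> closed_walk (o :: s).
Proof.
move=> /andP[Hw Hu] He Hh; rewrite /closed_walk cycle_walk Hh Hw He eqxx /=.
rewrite (otails_walk Hw); move: Hu; rewrite lastI /wend in He *.
by rewrite He rcons_uniq.
Qed.

Lemma ends_same (o o' : arc) : o.1 = o'.1 -> otail o \in [:: otail o'; ohead o'].
Proof. by case: o o' => e [] [e' []] /= ->; rewrite !inE eqxx ?orbT. Qed.

Lemma simple_walk_cons v o s : simple_walk v (o :: s) ->
  [/\ otail o = v, v \notin ohead o :: map ohead s & simple_walk (ohead o) s].
Proof. by rewrite /simple_walk /= => /andP[/andP[/eqP -> ->]] /andP[Hv ->]. Qed.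

Lemma simple_walk_uniq_edges v s : simple_walk v s -> uniq (map fst s).
Proof.
elim: s v => //= o s IH v /simple_walk_cons [Ht Hv Hs]; rewrite (IH _ Hs) andbT.
apply/mapP => [[o' Ho' He]]; case/andP: Hs => Hw _.
have /andP[M1 M2] := mem_walk Hw Ho'.
move: (ends_same He); rewrite Ht !inE => /orP[] /eqP Hq.
  by move: M1; rewrite -Hq (negbTE Hv).
by move: Hv; rewrite Hq inE M2 orbT.
Qed.

Lemma simple_walk_no_loop v s o : simple_walk v s -> o \in s -> otail o != ohead o.
Proof.
elim: s v => // o1 s IH v /simple_walk_cons [T1 V1 S1]; rewrite inE.
case/orP => [/eqP ->|]; last exact: IH S1.
by rewrite T1; apply/eqP => Eq; rewrite Eq inE eqxx in V1.
Qed.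

Lemma simple_walk_ends a s o' : simple_walk a s -> o' \in s ->
  otail o' \in [:: a; wend a s] -> ohead o' \in [:: a; wend a s] -> s = [:: o'].
Proof.
case: s => [//|o1 s] Hs; case/simple_walk_cons: (Hs) => Ht Hv Hs1.
rewrite inE => /orP[/eqP Eo|Ho'].
  subst o'; rewrite /wend /= => _; rewrite !inE => /orP[/eqP Eq|/eqP Eq].
    by rewrite Eq inE eqxx in Hv.
  case: s Hs1 Eq {Hs Hv} => //= o2 s /andP[_ /andP[Hn _]] Eq.
  by move: (mem_last (ohead o2) (map ohead s)); rewrite -Eq (negbTE Hn).
rewrite /wend /= -/(wend _ _) !inE => H1 H2.
have /andP[M1 M2] := mem_walk (proj1 (andP Hs1)) Ho'.
have Na x : x \in ohead o1 :: map ohead s -> x != a.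
  by move=> Hx; apply/eqP => Eq; subst x; rewrite Hx in Hv.
have E1 : otail o' = wend (ohead o1) s.
  by case/orP: H1 => /eqP // Eq; move: (Na _ M1); rewrite Eq eqxx.
have E2 : ohead o' = wend (ohead o1) s.
  case/orP: H2 => /eqP // Eq.
  have /Na : ohead o' \in ohead o1 :: map ohead s by rewrite inE M2 orbT.
  by rewrite Eq eqxx.
by have := simple_walk_no_loop Hs1 Ho'; rewrite E1 E2 eqxx.
Qed.

Lemma rev_of (o o' : arc) : o'.1 = o.1 -> otail o' != otail o -> o' = orev o.
Proof. by case: o o' => e [] [e' []] /= -> //; rewrite eqxx. Qed.

Lemma closed_walk_cases s :
  closed_walk s -> uniq (map fst s) \/ exists o, s = [:: o; orev o].
Proof.
case: s => [//|o s] Hc; have [Hw He] := closed_walk_cons Hc.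
have Hsw : simple_walk (ohead o) s.
  case/and3P: Hc => _ _ Hu; rewrite /simple_walk Hw lastI; rewrite /wend in He.
  by rewrite He rcons_uniq; rewrite /= (otails_walk Hw) in Hu.
have := simple_walk_uniq_edges Hsw; case Hin: (o.1 \in map fst s).
  move=> _; right; case/mapP: Hin => o' Ho' He'.
  have Hs : s = [:: o'].
    apply: (simple_walk_ends Hsw Ho'); rewrite He.
      by have := ends_same (esym He'); rewrite !inE orbC.
    have := ends_same (o := orev o') (o' := o); rewrite otail_rev /= => /(_ (esym He')).
    by rewrite !inE orbC.
  subst s; exists o; congr (_ :: [:: _]); apply: rev_of => //.
  by case/and3P: Hc => _ _; rewrite /= inE andbT eq_sym.
by move=> Hu'; left; rewrite /= Hin Hu'.
Qed.

Lemma closed_walk_rot s o : closed_walk s -> o \in s ->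
  exists s', closed_walk (o :: s') /\ perm_eq s (o :: s').
Proof.
move=> Hc Ho; move: Hc; case/splitPr: Ho => s1 s2 Hc; exists (s2 ++ s1).
have Eq : rot (size s1) (s1 ++ o :: s2) = o :: s2 ++ s1 by rewrite rot_size_cat.
split; last by rewrite -Eq perm_sym perm_rot.
case/and3P: Hc => _ Hc Hu; rewrite /closed_walk -Eq rot_cycle map_rot rot_uniq Hc Hu.
by rewrite Eq.
Qed.

Lemma reach_wend (r : rel V) a s : walk a s ->
  (forall o, o \in s -> connect r (otail o) (ohead o)) -> connect r a (wend a s).
Proof.
elim: s a => [|o s IH] a /=; first by rewrite connect0.
move=> /andP[/eqP Ht Hw] Hst; apply: connect_trans (IH _ Hw _).
  by rewrite -Ht Hst // inE eqxx.
by move=> o' Ho'; apply: Hst; rewrite inE Ho' orbT.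
Qed.

Lemma closed_walk_reach (r : rel V) s o : closed_walk s ->
  (forall o, o \in s -> connect r (otail o) (ohead o)) -> o \in s ->
  connect r (ohead o) (otail o).
Proof.
move=> Hc Hst Ho; have [s' [Hc' Hp]] := closed_walk_rot Hc Ho.
have [Hw He] := closed_walk_cons Hc'; rewrite -He; apply: reach_wend => // o' Ho'.
by apply: Hst; rewrite (perm_mem Hp) inE Ho' orbT.
Qed.

Lemma connect_simple_walk (r : rel V) (P : pred arc) :
  (forall u v, r u v -> exists o, [/\ P o, otail o = u & ohead o = v]) ->
  forall x y, connect r x y -> exists s, [/\ simple_walk x s, wend x s = y & all P s].
Proof.
move=> HP x y /connectP [l Hl ->]; case: (shortenP Hl) => l' Hl' Hu _.
suff [s [Hw Hm Ha]] : exists s, [/\ walk x s, map ohead s = l' & all P s].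
  by exists s; rewrite /simple_walk /wend Hw Hm Hu Ha.
elim: l' x {Hl Hu} Hl' => [|y' l'' IH] x' /=; first by exists [::].
case/andP => /HP [o [Po Ht Hh]] /IH [s [Hw Hm Ha]].
by exists (o :: s); rewrite /= Ht eqxx Hh Hw Hm Po Ha.
Qed.

Lemma dirrel_arc (D : {set arc}) o : o \in D -> dirrel t h D (otail o) (ohead o).
Proof. by move=> Ho; apply/existsP; exists o; rewrite Ho !eqxx. Qed.

Lemma dirrel_ex (D : {set arc}) u v :
  dirrel t h D u v -> exists o, [/\ o \in D, otail o = u & ohead o = v].
Proof. by case/existsP => o /andP[Ho /andP[/eqP <- /eqP <-]]; exists o. Qed.

Lemma dirrel_mono (D D1 : {set arc}) u v : D \subset D1 ->
  connect (dirrel t h D) u v -> connect (dirrel t h D1) u v.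
Proof.
move=> Hs; apply: connect_sub => x y /dirrel_ex [o [Ho <- <-]].
by apply: connect1; apply: dirrel_arc; apply: (subsetP Hs).
Qed.

Lemma strongly_connectedP (D : {set arc}) : is_orientation D ->
  (forall o, o \in D -> connect (dirrel t h D) (ohead o) (otail o)) ->
  strongly_connected t h D.
Proof.
move=> Ho Hc; split => // u v; apply: connect_sub => x y /orP[H|].
  by apply: connect1.
by case/dirrel_ex => o [Hd <- <-]; apply: Hc.
Qed.

Lemma strongly_connected_arc (D : {set arc}) o : strongly_connected t h D ->
  o \in D -> connect (dirrel t h D) (ohead o) (otail o).
Proof.
by case=> _ Hs Ho; apply: Hs; apply: connect1; apply/orP; right; exact: dirrel_arc.
Qed.

Lemma orientation_uniq_edges (D : {set arc}) s : is_orientation D ->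
  closed_walk s -> all (mem D) s -> uniq (map fst s).
Proof.
move=> HD /closed_walk_cases [//|[o ->]] /=; rewrite andbT => /andP[H1 H2].
by move: (HD o.1); case: o H1 H2 => e [] /= -> ->.
Qed.

Lemma arc_on_circuit (D : {set arc}) o : strongly_connected t h D -> o \in D ->
  exists s, [/\ closed_walk (o :: s), all (mem D) (o :: s) & uniq (map fst (o :: s))].
Proof.
move=> HS Ho; have := strongly_connected_arc HS Ho.
case/(connect_simple_walk (P := mem D) (@dirrel_ex D)) => s [Hsw He Ha].
have Hc : closed_walk (o :: s) by apply: closed_walk_of_simple Hsw He _.
exists s; split => //=; first by rewrite Ho Ha.
by apply: (orientation_uniq_edges HS.1 Hc); rewrite /= Ho Ha.
Qed.

Lemma circuit_of_walk s : closed_walk s -> uniq (map fst s) -> is_circuit t h [set o in s].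
Proof. by case/and3P => Hn Hc Hu Hf; exists s; split. Qed.

Lemma circuit_walk C : is_circuit t h C ->
  exists s, [/\ closed_walk s, uniq (map fst s) & C = [set o in s]].
Proof. by case=> s [Hn Hf Hu Hc ->]; exists s; rewrite /closed_walk Hn Hc Hu. Qed.

Lemma same_edge_eq (l : seq arc) o1 o2 : uniq (map fst l) ->
  o1 \in l -> o2 \in l -> o1.1 = o2.1 -> o1 = o2.
Proof.
elim: l => //= o l IH /andP[Hn Hu]; rewrite !inE => /orP[/eqP->|H1] /orP[/eqP->|H2] //.
- by move=> Eq; move: Hn; rewrite Eq (map_f _ H2).
- by move=> Eq; move: Hn; rewrite -Eq (map_f _ H1).
- exact: IH.
Qed.

Lemma adjG_minus_sym e : symmetric (adjG_minus t h e).
Proof.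
by move=> u v; apply/existsP/existsP => -[e' /andP[He H]]; exists e'; rewrite He orbC.
Qed.

Lemma adjG_minus_arc e u v :
  adjG_minus t h e u v -> exists o, [/\ o.1 != e, otail o = u & ohead o = v].
Proof.
case/existsP => e' /andP[He /orP[] /andP[/eqP H1 /eqP H2]].
  by exists (e', true).
by exists (e', false).
Qed.

Lemma arc_adjG_minus e (o : arc) : o.1 != e -> adjG_minus t h e (otail o) (ohead o).
Proof.
move=> He; apply/existsP; exists o.1; rewrite He /=.
by case: o He => e' [] _ /=; rewrite !eqxx ?orbT.
Qed.

Lemma connect_bridge (o : arc) :
  connect (adjG_minus t h o.1) (ohead o) (otail o) = ~~ bridge t h o.1.
Proof.
rewrite /bridge negbK; case: o => e [] //=.
by rewrite (sym_connect_sym (adjG_minus_sym e)).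
Qed.

Lemma circuit_edge_not_bridge s o : closed_walk s -> uniq (map fst s) -> o \in s ->
  ~~ bridge t h o.1.
Proof.
move=> Hc Hu Ho; have [s' [Hc' Hp]] := closed_walk_rot Hc Ho.
have [Hw He] := closed_walk_cons Hc'.
have Hu' : uniq (map fst (o :: s')) by rewrite -(perm_uniq (perm_map fst Hp)).
rewrite -connect_bridge -He; apply: reach_wend => // o' Ho'.
apply: connect1; apply: arc_adjG_minus.
by apply/eqP => Eq; move: Hu'; rewrite /= -Eq (map_f _ Ho').
Qed.

Lemma non_bridge_on_circuit (o : arc) : ~~ bridge t h o.1 ->
  exists s, [/\ closed_walk (o :: s), uniq (map fst (o :: s)) & all (fun o' => o'.1 != o.1) s].
Proof.
rewrite -connect_bridge.
case/(connect_simple_walk (P := fun o' : arc => o'.1 != o.1) (@adjG_minus_arc o.1)).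
move=> s [Hsw He Ha]; exists s; split => //; first exact: closed_walk_of_simple Hsw He _.
rewrite /= (simple_walk_uniq_edges Hsw) andbT; apply/mapP => [[o' Ho' Eq]].
by move/allP: Ha => /(_ _ Ho'); rewrite Eq eqxx.
Qed.

Lemma circuit_no_bridge C o : is_circuit t h C -> o \in C -> ~~ bridge t h o.1.
Proof.
by case/circuit_walk => s [Hc Hu ->]; rewrite inE; exact: circuit_edge_not_bridge.
Qed.

Definition covers (D : {set arc}) (e : E) : bool := ((e, true) \in D) || ((e, false) \in D).

Lemma covers_rev (D : {set arc}) o : o \notin D -> covers D o.1 -> orev o \in D.
Proof. by case: o => e [] /negbTE Hn; rewrite /covers /= Hn //= orbF. Qed.

Lemma strongly_connected_no_bridge (D : {set arc}) o :
  strongly_connected t h D -> o \in D -> ~~ bridge t h o.1.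
Proof.
move=> HS Ho; have [s [Hc _ Hu]] := arc_on_circuit HS Ho.
by apply: (circuit_edge_not_bridge Hc Hu); rewrite inE eqxx.
Qed.

Lemma orientation_of_Gcirc_full (D : {set arc}) : strongly_connected t h D ->
  (forall e, ~~ bridge t h e -> covers D e) -> orientation_of_Gcirc t h D.
Proof.
move=> HS Hcov; split; first exact: HS.1.
move=> e; apply/idP/idP => [/orP[] H|]; last exact: Hcov.
- exact: (strongly_connected_no_bridge (o := (e, true)) HS).
- exact: (strongly_connected_no_bridge (o := (e, false)) HS).
Qed.

(* Ear extension: an arc r on an uncovered non-bridge edge can be added to a
   strongly connected D, together with the uncovered part of a circuit
   through r, keeping strong connectivity. *)
Lemma ear_extension (D : {set arc}) r : strongly_connected t h D ->
  ~~ bridge t h r.1 -> ~~ covers D r.1 ->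
  exists D1, [/\ strongly_connected t h D1, D \subset D1 & r \in D1].
Proof.
move=> HS Hb Hr; have [s [Hc Hu _]] := non_bridge_on_circuit Hb.
pose D1 := D :|: [set o | (o \in r :: s) && ~~ covers D o.1].
have HDD1 : D \subset D1 by apply: subsetUl.
exists D1; split => //; last by rewrite !inE eqxx Hr orbT.
apply: strongly_connectedP.
  move=> e; apply/negP => /andP[]; rewrite !inE /=.
  case/orP => [H1|/andP[M1 C1]] /orP[H2|/andP[M2 C2]].
  - by move: (HS.1 e); rewrite H1 H2.
  - by move: C2; rewrite /covers /= H1.
  - by move: C1; rewrite /covers /= H2 orbT.
  - by have := same_edge_eq Hu M1 M2 erefl.
move=> o; rewrite !inE => /orP[Ho|/andP[Ho _]].
  by apply: (dirrel_mono HDD1); apply: strongly_connected_arc.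
apply: (closed_walk_reach Hc) => // o' Ho'.
case HD1 : (o' \in D1); first by apply: connect1; apply: dirrel_arc.
move: HD1; rewrite in_setU in_set Ho' /= => /norP[Hn /negbNE Hcv].
have := strongly_connected_arc HS (covers_rev Hn Hcv); rewrite otail_rev ohead_rev.
exact: dirrel_mono.
Qed.

(* Repeated ear extensions: S_D is nonempty. *)
Lemma SD_nonempty (D : {set arc}) : strongly_connected t h D -> exists D', in_SD t h D D'.
Proof.
pose U (D : {set arc}) := [set e | ~~ bridge t h e && ~~ covers D e].
have full D0 : strongly_connected t h D0 -> U D0 = set0 -> exists D', in_SD t h D0 D'.
  move=> HS U0; exists D0; split; rewrite ?subxx //.
  apply: (orientation_of_Gcirc_full HS) => e Hb; apply/negPn/negP => Hc.
  have : e \in U D0 by rewrite inE Hb Hc.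
  by rewrite U0 inE.
move: {2}#|U D| (leqnn #|U D|) => n; elim: n D => [|n IH] D Hn HS;
  case: (set_0Vmem (U D)) => [U0|[e He]]; try exact: full.
  by move: Hn; rewrite leqn0 cards_eq0 => /eqP U0; rewrite U0 inE in He.
move: (He); rewrite inE => /andP[Hb Hc].
have [D1 [HS1 Hsub Hr]] := ear_extension (r := (e, true)) HS Hb Hc.
have HU : U D1 \proper U D.
  apply/properP; split.
    apply/subsetP => x; rewrite !inE => /andP[-> /=]; apply: contra.
    by case/orP => H; rewrite /covers (subsetP Hsub _ H) ?orbT.
  by exists e => //; rewrite inE /covers Hr /= andbF.
have [D' [H1 H2 H3]] := IH D1 (leq_trans (proper_card HU) Hn) HS1.
by exists D'; split => //; apply: subset_trans H3.
Qed.

Lemma reverse_in_SD (D : {set arc}) o : strongly_connected t h D -> o \notin D ->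
  ~~ bridge t h o.1 -> exists2 D', in_SD t h D D' & orev o \in D'.
Proof.
move=> HD HnD Hb; case Hr: (orev o \in D).
  have [D' [H1 H2 H3]] := SD_nonempty HD.
  by exists D'; [split | exact: (subsetP H3 _ Hr)].
have Hcov : ~~ covers D o.1.
  by case: o HnD Hb Hr => e [] /= /negbTE H1 _ H2; rewrite /covers H1 H2.
have [D1 [HS1 Hsub1 Hr1]] := ear_extension (r := orev o) HD Hb Hcov.
have [D' [H1 H2 H3]] := SD_nonempty HS1.
by exists D'; [split => //; exact: subset_trans H3 | exact: (subsetP H3 _ Hr1)].
Qed.

End Walks.

Local Open Scope ring_scope.

Section Chains.
Variables (V E : finType) (t h : E -> V) (R : realFieldType).
Notation arc := (E * bool)%type.
Notation otail := (Defs.otail t h).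
Notation ohead := (Defs.ohead t h).
Notation vec := {ffun E -> R}.
Notation oval := (@oval E R).
Notation dot := (@dot E R).
Notation q := (@q E R).
Notation is_flow := (@is_flow V E t h R).
Notation xC := (@xC E R).
Notation closed_walk := (closed_walk t h).
Notation orev := (@orev E).

Definition sgn (o : arc) : R := if o.2 then 1 else -1.
Definition chain (s : seq arc) : vec := [ffun e => \sum_(o <- s | o.1 == e) sgn o].
Definition ichain (s : seq arc) : {ffun E -> int} :=
  [ffun e => \sum_(o <- s | o.1 == e) (if o.2 then 1 else -1)].

Lemma intc_ichain s : intc R (ichain s) = chain s.
Proof.
apply/ffunP => e; rewrite !ffunE rmorph_sum; apply: eq_bigr => o _.
by rewrite /sgn; case: o.2; rewrite ?rmorphN rmorph1.
Qed.

Lemma ovalE (x : vec) o : oval x o = sgn o * x o.1.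
Proof. by rewrite /oval /sgn; case: o.2; rewrite ?mul1r ?mulN1r. Qed.

Lemma oval_rev (x : vec) o : oval x (orev o) = - oval x o.
Proof. by rewrite /oval /orev /=; case: o.2; rewrite ?opprK. Qed.

Lemma dotC (x y : vec) : dot x y = dot y x.
Proof. by apply: eq_bigr => e _; rewrite mulrC. Qed.

Lemma sum_chain (P : pred E) (F : E -> R) s :
  \sum_(e | P e) F e * chain s e = \sum_(o <- s | P o.1) F o.1 * sgn o.
Proof.
under eq_bigr => e _ do rewrite ffunE mulr_sumr.
rewrite (exchange_big_dep xpredT) //= [RHS]big_mkcond /=; apply: eq_bigr => o _.
case: ifP => HP.
  rewrite (bigD1 o.1) /=; last by rewrite HP eqxx.
  rewrite big1 ?addr0 // => e /andP[/andP[_ /eqP Ee] Hne].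
  by rewrite Ee eqxx in Hne.
by rewrite big1 // => e /andP[He /eqP Eo]; rewrite -Eo HP in He.
Qed.

Lemma dot_chain (x : vec) s : dot x (chain s) = \sum_(o <- s) oval x o.
Proof. by rewrite /Defs.dot sum_chain; apply: eq_bigr => o _; rewrite ovalE mulrC. Qed.

Lemma closed_walk_heads s : closed_walk s -> perm_eq (map ohead s) (map otail s).
Proof.
case: s => [//|o s] Hc; have [Hw He] := closed_walk_cons Hc.
rewrite /= (otails_walk Hw) lastI; move: He; rewrite /wend => ->.
by rewrite perm_rcons.
Qed.

Lemma closed_walk_telescope (F : V -> R) s : closed_walk s ->
  \sum_(o <- s) F (otail o) = \sum_(o <- s) F (ohead o).
Proof.
move=> Hc; rewrite -(big_map otail xpredT F) -(big_map ohead xpredT F).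
by apply: perm_big; rewrite perm_sym; apply: closed_walk_heads.
Qed.

Lemma chain_flow s : closed_walk s -> is_flow (chain s).
Proof.
move=> Hc v; have sum1 P : \sum_(e | P e) chain s e = \sum_(o <- s | P o.1) sgn o.
  have := sum_chain P (fun _ => 1) s; under eq_bigr do rewrite mul1r; move=> ->.
  by apply: eq_bigr => o _; rewrite mul1r.
rewrite !sum1 (big_mkcond (fun o => t o.1 == v)) (big_mkcond (fun o => h o.1 == v)) -sumrB /=.
have -> : \sum_(o <- s) ((if t o.1 == v then sgn o else 0) - (if h o.1 == v then sgn o else 0))
   = \sum_(o <- s) ((otail o == v)%:R - (ohead o == v)%:R : R).
  apply: eq_bigr => -[e b] _; rewrite /sgn /Defs.otail /Defs.ohead /=.
  by case: b; case: (t e == v); case: (h e == v); rewrite /= ?subrr ?subr0 ?sub0r ?opprK.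
by rewrite sumrB (closed_walk_telescope (fun u => (u == v)%:R)) // subrr.
Qed.

Lemma chain_on_walk s o : uniq (map fst s) -> o \in s -> chain s o.1 = sgn o.
Proof.
elim: s => //= o1 s IH /andP[Hn Hu]; rewrite inE ffunE big_cons => /orP[/eqP Eo|Ho].
  subst o1; rewrite eqxx big1_seq ?addr0 // => o' /andP[/eqP Ef Ho'].
  by move: Hn; rewrite -Ef (map_f _ Ho').
have -> : (o1.1 == o.1) = false.
  by apply/negP => /eqP Ef; move: Hn; rewrite Ef (map_f _ Ho).
by rewrite -(IH Hu Ho) ffunE.
Qed.

Lemma chain_off_walk s e : e \notin map fst s -> chain s e = 0.
Proof.
move=> He; rewrite ffunE big1_seq // => o /andP[/eqP Eo Ho].
by move: He; rewrite -Eo (map_f _ Ho).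
Qed.

Lemma oval_chain s o : uniq (map fst s) -> o \in s -> oval (chain s) o = 1.
Proof.
by move=> Hu Ho; rewrite ovalE (chain_on_walk Hu Ho) /sgn; case: o.2; rewrite ?mulr1 ?mulrNN ?mulr1.
Qed.

Lemma q_chain s : uniq (map fst s) -> q (chain s) = \sum_(o <- s) 1.
Proof.
move=> Hu; rewrite /Defs.q dot_chain big_seq [RHS]big_seq; apply: eq_bigr => o Ho.
exact: oval_chain.
Qed.

Lemma xC_chain s : uniq (map fst s) -> xC [set o in s] = chain s.
Proof.
move=> Hu; apply/ffunP => e; rewrite [LHS]ffunE !inE.
case: ifP => [H1|H1]; first by rewrite (chain_on_walk (o := (e, true)) Hu H1).
case: ifP => [H2|H2]; first by rewrite (chain_on_walk (o := (e, false)) Hu H2).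
rewrite chain_off_walk //; apply/mapP => [[[e' b] Ho /= Ee]]; subst e'.
by case: b Ho => Ho; [rewrite Ho in H1|rewrite Ho in H2].
Qed.

Lemma xC_pos (C : {set arc}) o : 0 < oval (xC C) o -> o \in C.
Proof.
case: o => e b; rewrite /Defs.oval /= ffunE.
case Ht: ((e, true) \in C); case Hf: ((e, false) \in C); case: b => //= H; exfalso;
  by move: H; rewrite ?opprK ?oppr0; lra.
Qed.

Lemma circuit_flow C : is_circuit t h C -> is_flow (xC C).
Proof. by case/circuit_walk => s [Hc Hu ->]; rewrite xC_chain //; apply: chain_flow. Qed.

End Chains.

Lemma bigmin_mem (R : realDomainType) (I : Type) (r : seq I) (P : pred I) (F : I -> R) x :
  \big[Num.min/x]_(i <- r | P i) F i \in x :: [seq F i | i <- r & P i].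
Proof.
elim: r => [|i r IH]; first by rewrite big_nil mem_head.
rewrite big_cons /=; case: ifP => Pi //=; rewrite minEle !inE.
case: ifP => _; first by rewrite eqxx orbT.
by move: IH; rewrite inE => /orP[->|->]; rewrite ?orbT.
Qed.

Section Potentials.
Variables (V E : finType) (t h : E -> V) (R : realFieldType).
Notation arc := (E * bool)%type.
Notation otail := (Defs.otail t h).
Notation ohead := (Defs.ohead t h).
Notation closed_walk := (closed_walk t h).
Notation simple_walk := (simple_walk t h).
Notation wend := (wend t h).
Notation walk := (walk t h).

Fixpoint arc_seqs n : seq (seq arc) :=
  if n is n'.+1 then [::] :: [seq o :: s | o <- enum {: arc}, s <- arc_seqs n']
  else [:: [::]].

Lemma mem_arc_seqs n s : (size s <= n)%N -> s \in arc_seqs n.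
Proof.
elim: n s => [|n IH] [|o s] Hs //=; rewrite ?inE //.
apply/orP; right; apply: (allpairs_f (fun o s => o :: s)); first by rewrite mem_enum.
exact: IH.
Qed.

Lemma simple_walk_size v s : simple_walk v s -> (size s <= #|V|)%N.
Proof.
case/andP => _ Hu; have := card_uniqP Hu; rewrite /= size_map => Hc.
by apply: ltnW; rewrite -Hc max_card.
Qed.

Lemma split_walk_at v s x : x \in v :: map ohead s ->
  exists s1 s2, s = s1 ++ s2 /\ wend v s1 = x.
Proof.
elim: s v => [|o s IH] v.
  by move=> Hx; exists [::], [::]; split => //=; move: Hx; rewrite /= inE => /eqP.
rewrite inE; case/orP => [/eqP ->|Hx]; first by exists [::], (o :: s).
have [s1 [s2 [-> He]]] := IH (ohead o) Hx.
by exists (o :: s1), s2.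
Qed.

(* Potentials: if no closed walk of A-arcs has negative cost, the least cost
   of a simple A-walk ending at each vertex is a potential. *)
Lemma potential (A : pred arc) (c : arc -> R) :
  (forall s, closed_walk s -> all A s -> 0 <= \sum_(o <- s) c o) ->
  exists p : V -> R, forall o, A o -> p (ohead o) <= p (otail o) + c o.
Proof.
move=> Hcyc.
pose cands := [seq (v, s) | v <- enum V, s <- arc_seqs #|V|].
pose ok w (vs : V * seq arc) := [&& simple_walk vs.1 vs.2, all A vs.2 & wend vs.1 vs.2 == w].
pose cost (s : seq arc) := \sum_(o <- s) c o.
pose p w := \big[Num.min/0]_(vs <- cands | ok w vs) cost vs.2.
have in_cands v s : simple_walk v s -> (v, s) \in cands.
  move=> Hs; apply: allpairs_f; first by rewrite mem_enum.
  exact: mem_arc_seqs (simple_walk_size Hs).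
have p_le w v s : simple_walk v s -> all A s -> wend v s = w -> p w <= cost s.
  move=> Hs Ha He; apply: (@ge_bigmin_seq _ _ _ _ _ (v, s)); first exact: in_cands.
  by rewrite /ok Hs Ha He eqxx.
have p_mem w : exists v s, [/\ simple_walk v s, all A s, wend v s = w & p w = cost s].
  have := bigmin_mem cands (ok w) (fun vs => cost vs.2) 0; rewrite -/(p w) inE.
  case/orP => [/eqP ->|/mapP [[v s]]]; first by exists w, [::]; rewrite /cost big_nil.
  by rewrite mem_filter /ok /= => /andP[/and3P[Hs Ha /eqP He] _] ->; exists v, s.
exists p => o Ho.
have [v [s [Hs Ha He ->]]] := p_mem (otail o).
case Hm : (ohead o \in v :: map ohead s); last first.
  (* the best walk to the tail of o, extended by o, is still simple *)
  have Hsw : simple_walk v (rcons s o).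
    rewrite /simple_walk walk_rcons He eqxx andbT; case/andP: Hs => -> Hu.
    by rewrite map_rcons -rcons_cons rcons_uniq Hm Hu.
  apply: le_trans (p_le _ _ _ Hsw _ _) _; rewrite ?all_rcons ?Ho ?Ha ?wend_rcons //.
  by rewrite /cost -cats1 big_cat big_seq1.
(* otherwise o closes a cycle with the end of the best walk *)
have [s1 [s2 [Es E1]]] := split_walk_at Hm.
move: Hs Ha; rewrite Es /simple_walk walk_cat all_cat map_cat -cat_cons cat_uniq.
case/andP => /andP[Hw1 Hw2] /and3P[Hu1 Hnh Hu2] /andP[Ha1 Ha2].
have Hsw2 : simple_walk (ohead o) s2.
  rewrite /simple_walk -E1 Hw2 /= Hu2 andbT; apply/negP => Hl.
  by move/hasP: Hnh; apply; exists (wend v s1) => //; apply: mem_last.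
have Hc : closed_walk (o :: s2).
  by apply: closed_walk_of_simple Hsw2 _ erefl; rewrite -He Es wend_cat E1.
have := Hcyc _ Hc; rewrite /= Ho Ha2 big_cons => /(_ erefl) H0.
apply: le_trans (p_le _ _ _ _ Ha1 E1) _; first by rewrite /simple_walk Hw1 Hu1.
by rewrite /cost big_cat /= -addrA lerDl addrC.
Qed.

End Potentials.

Section Flows.
Variables (V E : finType) (t h : E -> V) (R : realFieldType).
Notation arc := (E * bool)%type.
Notation otail := (Defs.otail t h).
Notation vec := {ffun E -> R}.
Notation oval := (@oval E R).
Notation dot := (@dot E R).
Notation q := (@q E R).
Notation is_flow := (@is_flow V E t h R).

Definition scalev (k : R) (a : vec) : vec := [ffun e => k * a e].

Lemma dotDr (y a b : vec) : dot y (a + b) = dot y a + dot y b.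
Proof. by rewrite /Defs.dot -big_split; apply: eq_bigr => e _; rewrite ffunE mulrDr. Qed.

Lemma dotZr (y a : vec) k : dot y (scalev k a) = k * dot y a.
Proof. by rewrite /Defs.dot mulr_sumr; apply: eq_bigr => e _; rewrite ffunE mulrCA. Qed.

Lemma dotDl (a b u : vec) : dot (a + b) u = dot a u + dot b u.
Proof. by rewrite /Defs.dot -big_split; apply: eq_bigr => e _; rewrite ffunE mulrDl. Qed.

Lemma dotZl (a u : vec) k : dot (scalev k a) u = k * dot a u.
Proof. by rewrite /Defs.dot mulr_sumr; apply: eq_bigr => e _; rewrite ffunE mulrA. Qed.

Lemma dot0r (y : vec) : dot y 0 = 0.
Proof. by rewrite /Defs.dot big1 // => e _; rewrite ffunE mulr0. Qed.

Lemma dotBl (y a u : vec) : dot (subc y a) u = dot y u - dot a u.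
Proof. by rewrite /Defs.dot -sumrB; apply: eq_bigr => e _; rewrite ffunE mulrBl. Qed.

Lemma q_subc (x y : vec) : q (subc x y) = q x - 2 * dot x y + q y.
Proof.
rewrite /Defs.q /Defs.dot mulr_sumr -sumrB -big_split /=; apply: eq_bigr => e _.
by rewrite ffunE; ring.
Qed.

Lemma dot_eq0 (d : vec) : dot d d = 0 -> d = 0.
Proof.
move=> Hd; apply/ffunP => e; rewrite ffunE.
have /eqP := psumr_eq0P (fun e _ => sqr_ge0 (d e)) Hd (i := e) erefl.
by rewrite mulf_eq0 orbb => /eqP.
Qed.

Definition star (v : V) : vec := [ffun e => (t e == v)%:R - (h e == v)%:R].

Lemma flow_dotP (x : vec) : is_flow x <-> forall v, dot x (star v) = 0.
Proof.
have E1 v : dot x (star v) = \sum_(e | t e == v) x e - \sum_(e | h e == v) x e.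
  rewrite /Defs.dot (big_mkcond (fun e => t e == v)) (big_mkcond (fun e => h e == v)).
  rewrite -sumrB; apply: eq_bigr => e _; rewrite ffunE mulrBr.
  by case: (t e == v); case: (h e == v); rewrite /= ?mulr1 ?mulr0.
by split => H v; rewrite ?E1 ?(H v) // -E1 H.
Qed.

Lemma flow0 : is_flow 0.
Proof. by apply/flow_dotP => v; rewrite dotC dot0r. Qed.

Lemma flowD (a b : vec) : is_flow a -> is_flow b -> is_flow (a + b).
Proof.
by move=> /flow_dotP Ha /flow_dotP Hb; apply/flow_dotP => v; rewrite dotDl Ha Hb addr0.
Qed.

Lemma flowZ k (a : vec) : is_flow a -> is_flow (scalev k a).
Proof. by move=> /flow_dotP Ha; apply/flow_dotP => v; rewrite dotZl Ha mulr0. Qed.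

Lemma flowB (a b : vec) : is_flow a -> is_flow b -> is_flow (subc a b).
Proof.
by move=> /flow_dotP Ha /flow_dotP Hb; apply/flow_dotP => v; rewrite dotBl Ha Hb subrr.
Qed.

Lemma flow_potential (f : vec) (p : V -> R) : is_flow f ->
  \sum_e f e * (p (h e) - p (t e)) = 0.
Proof.
move=> Hf.
have Hpart (g : E -> V) : \sum_e f e * p (g e) = \sum_v p v * \sum_(e | g e == v) f e.
  rewrite (partition_big g xpredT) //=; apply: eq_bigr => v _.
  by rewrite mulr_sumr; apply: eq_bigr => e /eqP <-; rewrite mulrC.
under eq_bigr do rewrite mulrBr.
rewrite sumrB !Hpart -sumrB big1 // => v _.
by rewrite -mulrBr -opprB (Hf v) oppr0 mulr0.
Qed.

(* Flows vanish on bridges: the flow across the cut of a bridge is 0. *)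
Lemma flow_bridge (f : vec) e : is_flow f -> bridge t h e -> f e = 0.
Proof.
move=> Hf Hb.
pose S := [set v | connect (adjG_minus t h e) (t e) v].
have HS e' : e' != e -> (t e' \in S) = (h e' \in S).
  move=> He'; rewrite !inE; apply/idP/idP => H.
    exact: connect_trans H (connect1 (arc_adjG_minus t h (o := (e', true)) He')).
  exact: connect_trans H (connect1 (arc_adjG_minus t h (o := (e', false)) He')).
have Hh : h e \notin S by rewrite inE.
have Hsum (g : E -> V) :
    \sum_(v in S) \sum_(e' | g e' == v) f e' = \sum_(e' | g e' \in S) f e'.
  rewrite (partition_big g (mem S)) //=; apply: eq_bigr => v Hv.
  by apply: eq_bigl => i; case: eqP => [->|]; rewrite ?Hv ?andbF.
have : \sum_(e' | t e' \in S) f e' - \sum_(e' | h e' \in S) f e' = 0.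
  by rewrite -(Hsum t) -(Hsum h) -sumrB big1 // => v _; apply: Hf.
rewrite (bigD1 e) /= ?inE ?connect0 //.
rewrite [X in _ - X](eq_bigl (fun e' => (t e' \in S) && (e' != e))); first by rewrite addrK.
move=> e' /=; case: (eqVneq e' e) => [->|Hne]; first by rewrite (negbTE Hh) andbF.
by rewrite HS // andbT.
Qed.

Lemma flow_out_arcs (x : vec) v : is_flow x -> \sum_(o : arc | otail o == v) oval x o = 0.
Proof.
move=> Hf.
have -> : \sum_(o : arc | otail o == v) oval x o =
    \sum_e ((if t e == v then x e else 0) + (if h e == v then - x e else 0)).
  rewrite big_mkcond -(pair_big xpredT xpredT
    (fun e b => if otail (e, b) == v then oval x (e, b) else 0)) /=.
  by apply: eq_big => // e _; rewrite big_bool.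
rewrite big_split /= -(big_mkcond (fun e => t e == v)).
have -> : \sum_e (if h e == v then - x e else 0) = - \sum_(e | h e == v) x e.
  by rewrite -sumrN [RHS]big_mkcond; apply: eq_bigr => e _; case: ifP; rewrite ?oppr0.
exact: Hf.
Qed.

End Flows.

Section VoronoiCell.
Variables (V E : finType) (t h : E -> V) (R : realFieldType).
Notation arc := (E * bool)%type.
Notation otail := (Defs.otail t h).
Notation ohead := (Defs.ohead t h).
Notation vec := {ffun E -> R}.
Notation oval := (@oval E R).
Notation dot := (@dot E R).
Notation q := (@q E R).
Notation is_flow := (@is_flow V E t h R).
Notation xC := (@xC E R).
Notation VO := (@VO V E t h R).

Definition circuit_ineqs (x : vec) : Prop :=
  forall C, is_circuit t h C -> 2 * dot x (xC C) <= q (xC C).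

Lemma VO_lattice x : VO x <->
  is_flow x /\ forall m, is_flow (intc R m) -> 2 * dot x (intc R m) <= q (intc R m).
Proof. by split => -[Hf H]; split => // m Hm; have := H m Hm; rewrite q_subc; lra. Qed.

(* Circuit chains are integer flows, so points of V_O satisfy the circuit inequalities. *)
Lemma VO_circuit_ineqs x : VO x -> circuit_ineqs x.
Proof.
move=> /VO_lattice [_ H] C /circuit_walk [s [Hc Hu ->]]; rewrite xC_chain // -intc_ichain.
by apply: H; rewrite intc_ichain; apply: chain_flow.
Qed.

(* No closed walk has negative cost 1 - 2<x, o> per arc, hence a potential. *)
Lemma circuit_ineqs_potential (x : vec) : circuit_ineqs x ->
  exists p : V -> R, forall o, p (ohead o) <= p (otail o) + (1 - 2 * oval x o).
Proof.
move=> HC; have := @potential V E t h R xpredT (fun o => 1 - 2 * oval x o).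
case=> [s Hc _|p Hp]; last by exists p => o; apply: Hp.
case: (closed_walk_cases Hc) => [Hu|[o ->]].
  have := HC _ (circuit_of_walk Hc Hu).
  by rewrite xC_chain // dot_chain q_chain // sumrB -mulr_sumr subr_ge0.
by rewrite !big_cons big_nil oval_rev; lra.
Qed.

Lemma mul_int_le_sq (g : R) (k : int) : -1 <= g <= 1 -> g * k%:~R <= k%:~R * k%:~R.
Proof.
case/andP => H1 H2; have : (k = 0) \/ (1 <= k)%R \/ (k <= -1)%R by lia.
case=> [->|[Hk|Hk]]; first by rewrite !mulr0.
  have Hk' : (1 : R) <= k%:~R by rewrite -(ler_int R) in Hk.
  nra.
have Hk' : k%:~R <= (-1 : R).
  by rewrite -(ler_int R) in Hk; rewrite rmorphN rmorph1 in Hk.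
nra.
Qed.

(* A potential bounding the arc costs certifies membership in V_O: pairing
   with an integer flow m, the potential part vanishes and the rest is
   bounded edgewise by mul_int_le_sq. *)
Lemma potential_VO (x : vec) p : is_flow x ->
  (forall o, p (ohead o) <= p (otail o) + (1 - 2 * oval x o)) -> VO x.
Proof.
move=> Hf Hp; apply/VO_lattice; split => // m Hm.
pose g e := 2 * x e + p (h e) - p (t e).
have -> : 2 * dot x (intc R m) =
    \sum_e g e * intc R m e - \sum_e intc R m e * (p (h e) - p (t e)).
  by rewrite /Defs.dot mulr_sumr -sumrB; apply: eq_bigr => e _; rewrite /g; ring.
rewrite flow_potential // subr0 /Defs.q /Defs.dot; apply: ler_sum => e _.
rewrite ffunE; apply: mul_int_le_sq.
have := Hp (e, true); have := Hp (e, false).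
by rewrite /g /Defs.oval /Defs.otail /Defs.ohead /= => H1 H2; apply/andP; split; lra.
Qed.

Lemma VO_circuitsP (x : vec) : VO x <-> is_flow x /\ circuit_ineqs x.
Proof.
split=> [Hx|[Hf /circuit_ineqs_potential [p Hp]]]; last exact: potential_VO Hp.
by split; [exact: Hx.1 | exact: VO_circuit_ineqs].
Qed.

End VoronoiCell.

Lemma psum_seq_eq0 (R : numDomainType) (I : eqType) (l : seq I) (F : I -> R) :
  (forall x, x \in l -> 0 <= F x) -> \sum_(x <- l) F x = 0 ->
  forall x, x \in l -> F x = 0.
Proof.
move=> Hp; rewrite big_seq_cond => /eqP; rewrite psumr_eq0; last first.
  by move=> x /andP[Hx _]; apply: Hp.
by move=> /allP H x Hx; apply/eqP; have := H x Hx; rewrite Hx.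
Qed.

Section Orthogonal.
Variables (E : finType) (R : realFieldType).
Notation vec := {ffun E -> R}.
Notation dot := (@dot E R).

Definition in_span (l : seq vec) (w : vec) : Prop :=
  forall P : vec -> Prop, P 0 -> (forall a b, P a -> P b -> P (a + b)) ->
    (forall k a, P a -> P (scalev k a)) -> (forall u, u \in l -> P u) -> P w.

Lemma in_span_orth l y w : (forall u, u \in l -> dot y u = 0) -> in_span l w -> dot y w = 0.
Proof.
move=> Hl Hw; apply: (Hw (fun w => dot y w = 0)) => //.
- exact: dot0r.
- by move=> a b Ha Hb; rewrite dotDr Ha Hb addr0.
- by move=> k a Ha; rewrite dotZr Ha mulr0.
Qed.

Lemma in_span_mono l l' w : {subset l <= l'} -> in_span l w -> in_span l' w.
Proof. by move=> Hs Hw P P0 PA PS Pl; apply: Hw => // u Hu; apply: (Pl); apply: Hs. Qed.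

Lemma orth_projection (l : seq vec) (y : vec) :
  exists w, in_span l w /\ forall u, u \in l -> dot (subc y w) u = 0.
Proof.
elim: l y => [|u l IH] y; first by exists 0; split => // P P0.
have [w' [Hw' Ho']] := IH y; have [wu [Hwu Hou]] := IH u.
pose r := subc u wu.
have Hrwu : dot r wu = 0 := in_span_orth Hou Hwu.
have Hyw : dot (subc y w') wu = 0 := in_span_orth Ho' Hwu.
have Hsub : {subset l <= u :: l} by move=> x Hx; rewrite inE Hx orbT.
have Hsplit X : dot X u = dot X r + dot X wu.
  by rewrite /Defs.dot -big_split /=; apply: eq_bigr => e _; rewrite /r ffunE; ring.
case: (eqVneq (dot r r) 0) => [/dot_eq0 Hr0|Hrr].
  have Huw : u = wu by apply/ffunP => e; move/ffunP: Hr0 => /(_ e); rewrite !ffunE => /subr0_eq.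
  exists w'; split; first exact: in_span_mono Hw'.
  by move=> u'; rewrite inE => /orP[/eqP ->|]; [rewrite Huw | exact: Ho'].
pose k := dot (subc y w') r / dot r r.
exists (w' + scalev k r); split.
  move=> P P0 PA PS Pl; apply: (PA).
    by apply: (Hw' P P0 PA PS) => x Hx; apply: (Pl); apply: Hsub.
  have -> : r = u + scalev (-1) wu by apply/ffunP => e; rewrite !ffunE; ring.
  apply: (PS); apply: (PA); first by apply: (Pl); rewrite inE eqxx.
  by apply: (PS); apply: (Hwu P P0 PA PS) => x Hx; apply: (Pl); apply: Hsub.
have Hlin X : dot (subc y (w' + scalev k r)) X = dot (subc y w') X - k * dot r X.
  by rewrite /Defs.dot mulr_sumr -sumrB; apply: eq_bigr => e _; rewrite !ffunE; ring.
move=> u'; rewrite inE Hlin => /orP[/eqP ->|Hu'].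
  by rewrite Hsplit Hyw addr0 Hsplit Hrwu addr0 /k divfK // subrr.
by rewrite (Ho' _ Hu') Hou // mulr0 subrr.
Qed.

End Orthogonal.

Section PointsOfOrientations.
Variables (V E : finType) (t h : E -> V) (R : realFieldType).
Notation arc := (E * bool)%type.
Notation otail := (Defs.otail t h).
Notation ohead := (Defs.ohead t h).
Notation vec := {ffun E -> R}.
Notation oval := (@oval E R).
Notation dot := (@dot E R).
Notation q := (@q E R).
Notation is_flow := (@is_flow V E t h R).
Notation xC := (@xC E R).
Notation closed_walk := (closed_walk t h).
Notation VO := (@VO V E t h R).

Lemma strongly_connected_potential (D : {set arc}) (z : vec) : strongly_connected t h D ->
  (forall s, closed_walk s -> all (mem D) s -> \sum_(o <- s) oval z o = 0) ->
  exists p : V -> R, forall o, o \in D -> oval z o = p (ohead o) - p (otail o).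
Proof.
move=> HS Hz.
have [p Hp] : exists p : V -> R, forall o, o \in D -> p (ohead o) <= p (otail o) + - oval z o.
  apply: (@potential V E t h R (mem D) (fun o => - oval z o)) => s Hc Ha.
  by rewrite sumrN (Hz s Hc Ha) oppr0.
exists (fun v => - p v) => o Ho.
(* the inequality is an equality on o, as o lies on a closed walk of D *)
have [s [Hc Ha _]] := arc_on_circuit HS Ho.
have Hsum : \sum_(o' <- o :: s) (p (otail o') - p (ohead o') - oval z o') = 0.
  by rewrite !sumrB (closed_walk_telescope _ Hc) subrr sub0r (Hz _ Hc Ha) oppr0.
have Hnn x : x \in o :: s -> 0 <= p (otail x) - p (ohead x) - oval z x.
  by move=> Hx; have := Hp x (allP Ha _ Hx); lra.
by have := psum_seq_eq0 Hnn Hsum (mem_head o s); lra.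
Qed.

Lemma xC_orientation (D : {set arc}) o : is_orientation D -> o \in D -> oval (xC D) o = 1.
Proof.
move=> HO; case: o => e [] Ho; rewrite /Defs.oval /Defs.xC ffunE /= Ho //.
by move: (HO e); rewrite Ho andbT => /negbTE ->; rewrite opprK.
Qed.

Lemma xC_bound (C : {set arc}) e : -1 <= xC C e <= 1.
Proof. by rewrite ffunE; case: ifP => _; [|case: ifP => _]; apply/andP; split; lra. Qed.

(* Each term of <x^{D'}, x^C> is at most the corresponding term of q(x^C),
   strictly so on an edge that D' orients against C. *)
Lemma xC_mul_le (g : R) (C : {set arc}) e : -1 <= g <= 1 -> g * xC C e <= xC C e * xC C e.
Proof.
case/andP => H1 H2; rewrite ffunE.
by case: ifP => _; [|case: ifP => _]; rewrite ?mulr1 ?mulrN1 ?mulr0 ?mulN1r ?opprK; lra.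
Qed.

Lemma dot_xC_lt (D' C : {set arc}) o : is_orientation D' -> orev o \in D' ->
  0 < oval (xC C) o -> dot (xC D') (xC C) < q (xC C).
Proof.
move=> HO Hr Hpos; have := xC_orientation HO Hr; rewrite oval_rev => /eqP.
rewrite eqr_oppLR => /eqP Hneg.
rewrite /Defs.q /Defs.dot (bigD1 o.1) //= [X in _ < X](bigD1 o.1) //=.
apply: ltr_leD; last by apply: ler_sum => e _; apply: xC_mul_le; exact: xC_bound.
by move: Hneg Hpos; rewrite /Defs.oval; case: o.2 => H1 H2; nra.
Qed.

Lemma dot_xC_orientation (D' C : {set arc}) : is_orientation D' -> is_circuit t h C ->
  C \subset D' -> dot (xC D') (xC C) = q (xC C).
Proof.
move=> HO /circuit_walk [s [Hc Hu ->]] Hsub.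
rewrite xC_chain // dot_chain q_chain //; apply: eq_big_seq => o Ho.
by apply: xC_orientation => //; apply: (subsetP Hsub); rewrite inE.
Qed.

(* For D' in S_D, x^{D'} - 2 v^{D'} sums to zero along the circuits of D', so
   it is a potential difference on D'; as flows vanish on the bridges, the
   edges outside D', it is orthogonal to all flows. *)
Lemma vD_pairing D' v : strongly_connected t h D' -> orientation_of_Gcirc t h D' ->
  is_vD t h D' v -> forall f, is_flow f -> dot (xC D') f = 2 * dot v f.
Proof.
move=> HS HO [_ HvC] f Hf.
pose z : vec := subc (xC D') (scalev 2 v).
have [p Hp] : exists p : V -> R, forall o, o \in D' -> oval z o = p (ohead o) - p (otail o).
  apply: (strongly_connected_potential HS) => s Hc Ha.
  have Hu := orientation_uniq_edges HS.1 Hc Ha.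
  have HC := circuit_of_walk Hc Hu.
  have Hsub : [set o in s] \subset D'.
    by apply/subsetP => o; rewrite inE => Ho; exact: (allP Ha).
  rewrite -dot_chain -xC_chain // /z dotBl dotZl (dot_xC_orientation HS.1 HC Hsub).
  by rewrite (HvC _ HC Hsub) subrr.
have : dot z f = 0.
  rewrite /Defs.dot -[RHS](flow_potential p Hf); apply: eq_bigr => e _.
  case Hb: (bridge t h e); first by rewrite (flow_bridge Hf Hb) !mulr0 mul0r.
  have := HO.2 e; rewrite Hb /= => /orP[H1|H2].
    by have := Hp _ H1; rewrite /Defs.oval /= => ->; rewrite mulrC.
  have := Hp _ H2; rewrite /Defs.oval /= => H; rewrite mulrC; congr (_ * _); lra.
by rewrite dotBl dotZl; lra.
Qed.

Lemma in_span_flow l w : (forall u, u \in l -> is_flow u) -> in_span l w -> is_flow w.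
Proof. by move=> Hl Hw; apply: (Hw is_flow) => //; [exact: flow0|exact: flowD|exact: flowZ]. Qed.

(* v^{D'} exists: project x^{D'}/2 on the span of the circuits of D'. *)
Lemma vD_exists D' : is_orientation D' -> exists v : vec, is_vD t h D' v.
Proof.
move=> HO.
pose l := map xC (enum [set C : {set arc} | asbool (is_circuit t h C) && (C \subset D')]).
have [w [Hw Ho]] := orth_projection l (scalev (1/2) (xC D')).
exists w; split.
  apply: (in_span_flow _ Hw) => u /mapP [C HC ->]; move: HC; rewrite mem_enum inE.
  by case/andP => /asboolP Hc _; apply: circuit_flow.
move=> C HC Hsub.
have Hin : xC C \in l by apply: map_f; rewrite mem_enum inE Hsub andbT; apply/asboolP.
have := Ho _ Hin; rewrite dotBl dotZl (dot_xC_orientation HO HC Hsub); lra.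
Qed.

(* v^{D'} is unique: the difference of two candidates is a flow orthogonal
   to all flows. *)
Lemma vD_unique D' (v1 v2 : vec) : strongly_connected t h D' -> orientation_of_Gcirc t h D' ->
  is_vD t h D' v1 -> is_vD t h D' v2 -> v1 = v2.
Proof.
move=> HS HO H1 H2; pose d := subc v1 v2.
have Hd : is_flow d by apply: flowB; [exact: H1.1|exact: H2.1].
have := vD_pairing HS HO H1 Hd; rewrite (vD_pairing HS HO H2 Hd) => Heq.
have /dot_eq0 /ffunP Hdd : dot d d = 0 by rewrite {1}/d dotBl; lra.
by apply/ffunP => e; have := Hdd e; rewrite !ffunE => /subr0_eq.
Qed.

(* v^{D'} lies in V_O: pair with integer flows and use |x^{D'}| <= 1. *)
Lemma vD_VO D' (v : vec) : strongly_connected t h D' -> orientation_of_Gcirc t h D' ->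
  is_vD t h D' v -> VO v.
Proof.
move=> HS HO Hv; apply/VO_lattice; split; first exact: Hv.1.
move=> m Hm; rewrite -(vD_pairing HS HO Hv Hm) /Defs.dot /Defs.q /Defs.dot.
by apply: ler_sum => e _; move: (mul_int_le_sq (m e) (xC_bound D' e)); rewrite !ffunE.
Qed.

End PointsOfOrientations.

Section ConvexHull.
Variables (E : finType) (R : realFieldType).
Notation vec := {ffun E -> R}.
Notation dot := (@dot E R).

Lemma dot_comb n (p : 'I_n -> vec) (w : 'I_n -> R) (x u : vec) :
  (forall e, x e = \sum_i w i * p i e) -> dot x u = \sum_i w i * dot (p i) u.
Proof.
move=> Hx; rewrite /Defs.dot; under eq_bigr do rewrite Hx mulr_suml.
rewrite exchange_big; apply: eq_bigr => i _; rewrite mulr_sumr; apply: eq_bigr => e _.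
by rewrite mulrA.
Qed.

Lemma conv_dot (P : vec -> Prop) x u c :
  conv P x -> (forall y, P y -> dot y u = c) -> dot x u = c.
Proof.
case=> n [p [w [HP Hw Hs Hx]]] Hc; rewrite (dot_comb _ Hx).
by under eq_bigr do rewrite Hc //; rewrite -mulr_suml Hs mul1r.
Qed.

Lemma conv_dot_le (P : vec -> Prop) x u c :
  conv P x -> (forall y, P y -> dot y u <= c) -> dot x u <= c.
Proof.
case=> n [p [w [HP Hw Hs Hx]]] Hc; rewrite (dot_comb _ Hx).
apply: le_trans (_ : \sum_i w i * c <= _); last by rewrite -mulr_suml Hs mul1r.
by apply: ler_sum => i _; apply: ler_wpM2l => //; apply: Hc.
Qed.

Lemma conv_pt (P : vec -> Prop) x : P x -> conv P x.
Proof.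
move=> Hx; exists 1%N, (fun _ => x), (fun _ => 1); split => //.
- by rewrite big_ord1.
- by move=> e; rewrite big_ord1 mul1r.
Qed.

Lemma split_lshift m n (j : 'I_m) : split (lshift n j) = inl j.
Proof. exact: (@unsplitK m n (inl j)). Qed.

Lemma split_rshift m n (j : 'I_n) : split (rshift m j) = inr j.
Proof. exact: (@unsplitK m n (inr j)). Qed.

(* conv P is convex: concatenate the two families of points. *)
Lemma conv_comb (P : vec -> Prop) a b k : conv P a -> conv P b -> 0 <= k -> k <= 1 ->
  conv P [ffun e => k * a e + (1 - k) * b e].
Proof.
case=> n1 [p1 [w1 [HP1 Hw1 Hs1 Hx1]]] [n2 [p2 [w2 [HP2 Hw2 Hs2 Hx2]]]] Hk0 Hk1.
pose p (i : 'I_(n1 + n2)) := match split i with inl j => p1 j | inr j => p2 j end.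
pose w (i : 'I_(n1 + n2)) :=
  match split i with inl j => k * w1 j | inr j => (1 - k) * w2 j end.
exists (n1 + n2)%N, p, w; split.
- by move=> i; rewrite /p; case: split.
- move=> i; rewrite /w; case: split => j; apply: mulr_ge0 => //; lra.
- rewrite big_split_ord /=.
  under eq_bigr do rewrite /w split_lshift.
  under [X in _ + X]eq_bigr do rewrite /w split_rshift.
  by rewrite -!mulr_sumr Hs1 Hs2; ring.
- move=> e; rewrite ffunE big_split_ord /= Hx1 Hx2 !mulr_sumr.
  congr (_ + _); apply: eq_bigr => i _.
    by rewrite /w /p split_lshift mulrA.
  by rewrite /w /p split_rshift mulrA.
Qed.

End ConvexHull.

Section Descent.
Variables (V E : finType) (t h : E -> V) (R : realFieldType).
Notation arc := (E * bool)%type.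
Notation otail := (Defs.otail t h).
Notation ohead := (Defs.ohead t h).
Notation vec := {ffun E -> R}.
Notation oval := (@oval E R).
Notation dot := (@dot E R).
Notation q := (@q E R).
Notation is_flow := (@is_flow V E t h R).
Notation xC := (@xC E R).
Notation closed_walk := (closed_walk t h).
Notation orev := (@orev E).
Notation VO := (@VO V E t h R).

Lemma flow_successor (d : vec) o : is_flow d -> 0 < oval d o ->
  exists o', otail o' = ohead o /\ 0 < oval d o'.
Proof.
move=> Hf Ho; apply: NNPP => Hn.
have Hle : \sum_(o' | (otail o' == ohead o) && (o' != orev o)) oval d o' <= 0.
  apply: sumr_le0 => o' /andP[/eqP Ht _]; rewrite leNgt; apply/negP => Hpos.
  by apply: Hn; exists o'.
have := flow_out_arcs (ohead o) Hf.
by rewrite (bigD1 (orev o)) ?otail_rev //= oval_rev; lra.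
Qed.

(* If every arc of a nonempty A is followed by an arc of A, then A contains a
   closed walk: otherwise a potential decreasing along A-arcs would have no
   minimum on their heads. *)
Lemma successor_closed_walk (A : {pred arc}) o0 : A o0 ->
  (forall o, A o -> exists o', otail o' = ohead o /\ A o') ->
  exists s, closed_walk s /\ all A s.
Proof.
move=> Ho0 Hsucc; apply: NNPP => Hno.
have [p Hp] : exists p : V -> R, forall o, A o -> p (ohead o) <= p (otail o) + -1.
  apply: (@potential V E t h R A (fun _ => -1)) => s Hc Ha.
  by exfalso; apply: Hno; exists s.
case: (@arg_minP _ _ _ o0 A (fun o => p (ohead o)) Ho0) => om Hom Hmin.
have [o' [Ht' Ho']] := Hsucc _ Hom.
by have := Hp _ Ho'; have := Hmin _ Ho'; rewrite Ht'; lra.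
Qed.

Lemma positive_circuit (d : vec) e0 : is_flow d -> d e0 != 0 ->
  exists C, is_circuit t h C /\ 0 < dot d (xC C).
Proof.
move=> Hf Hd0; pose A := [pred o : arc | 0 < oval d o].
have [o0 Ho0] : exists o0, A o0.
  case: (ltrP 0 (d e0)) => H; [exists (e0, true) | exists (e0, false)] => //.
  by rewrite /A /= /Defs.oval /= oppr_gt0 lt_neqAle Hd0.
have [s [Hc Ha]] := successor_closed_walk Ho0 (fun o => flow_successor Hf).
have Hu : uniq (map fst s).
  case: (closed_walk_cases Hc) => // -[o Es]; move: Ha; rewrite Es /= andbT oval_rev.
  by case/andP => H1; rewrite oppr_gt0 => H2; move: (lt_trans H1 H2); rewrite ltxx.
exists [set o in s]; split; first exact: circuit_of_walk.
rewrite xC_chain // dot_chain; case: s Hc Ha {Hu} => [//|o s] _ /= /andP[Ho Ha].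
rewrite big_cons; apply: ltr_wpDr => //.
by rewrite big_seq; apply: sumr_ge0 => o' Ho'; exact: ltW (allP Ha _ Ho').
Qed.

Definition tight (x : vec) (C : {set arc}) : bool := 2 * dot x (xC C) == q (xC C).

Definition circuitb (C : {set arc}) : bool := asbool (is_circuit t h C).

Lemma move_to_new_tight (x dd : vec) : VO x -> is_flow dd ->
  (forall C, is_circuit t h C -> tight x C -> dot dd (xC C) = 0) ->
  (exists C, is_circuit t h C /\ 0 < dot dd (xC C)) ->
  exists tau, [/\ 0 < tau, VO (x + scalev tau dd),
    (forall C, is_circuit t h C -> tight x C -> tight (x + scalev tau dd) C) &
    exists C, [/\ is_circuit t h C, ~~ tight x C & tight (x + scalev tau dd) C]].
Proof.
move=> Hx Hdd Horth [C0 [HC0 Hpos0]].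
pose P := [pred C | circuitb C && (0 < dot dd (xC C))].
pose slack C := q (xC C) - 2 * dot x (xC C).
pose ratio C := slack C / (2 * dot dd (xC C)).
have PC0 : P C0 by rewrite inE /= Hpos0 andbT; apply/asboolP.
case: (@arg_minP _ _ _ C0 P ratio PC0) => Cm /andP[/asboolP HCm HCmp] Hmin.
have Hslack C : is_circuit t h C -> 0 <= slack C.
  by move=> HC; rewrite subr_ge0; exact: (VO_circuit_ineqs Hx HC).
have HCmnt : ~~ tight x Cm.
  by apply/negP => Ht; move: HCmp; rewrite (Horth _ HCm Ht) ltxx.
have Htau : 0 < ratio Cm.
  rewrite divr_gt0 ?mulr_gt0 // lt_neqAle Hslack // andbT eq_sym subr_eq0.
  by apply: contra HCmnt; rewrite /tight eq_sym.
have Hshift C : dot (x + scalev (ratio Cm) dd) (xC C) =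
    dot x (xC C) + ratio Cm * dot dd (xC C) by rewrite dotDl dotZl.
exists (ratio Cm); split => //.
- apply/VO_circuitsP; split; first exact: flowD (Hx.1) (flowZ _ Hdd).
  move=> C HC; rewrite Hshift; have := Hslack C HC; rewrite /slack.
  case: (lerP (dot dd (xC C)) 0) => Hs.
    have : ratio Cm * dot dd (xC C) <= 0 by apply: mulr_ge0_le0 => //; apply: ltW.
    lra.
  have : ratio Cm <= ratio C by apply: Hmin; rewrite inE /= Hs andbT; apply/asboolP.
  by rewrite {2}/ratio ler_pdivlMr ?mulr_gt0 // /slack; lra.
- by move=> C HC Ht; rewrite /tight Hshift (Horth C HC Ht) mulr0 addr0.
- exists Cm; split => //; rewrite /tight Hshift /ratio /slack; apply/eqP.
  by field; rewrite gt_eqF.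
Qed.

End Descent.

Section TightArcs.
Variables (V E : finType) (t h : E -> V) (R : realFieldType).
Notation arc := (E * bool)%type.
Notation otail := (Defs.otail t h).
Notation ohead := (Defs.ohead t h).
Notation vec := {ffun E -> R}.
Notation oval := (@oval E R).
Notation dot := (@dot E R).
Notation q := (@q E R).
Notation xC := (@xC E R).
Notation closed_walk := (closed_walk t h).
Notation VO := (@VO V E t h R).
Notation tight := (@tight E R).

Definition tight_arcs (x : vec) : {set arc} :=
  [set o | asbool (exists C, [/\ is_circuit t h C, tight x C & o \in C])].

Lemma tight_arcsP x o :
  reflect (exists C, [/\ is_circuit t h C, tight x C & o \in C]) (o \in tight_arcs x).
Proof. by rewrite inE; apply: asboolP. Qed.

Definition rcost (x : vec) (p : V -> R) (o : arc) : R :=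
  p (otail o) + (1 - 2 * oval x o) - p (ohead o).

Lemma rcost_circuit x p s : closed_walk s -> uniq (map fst s) ->
  \sum_(o <- s) rcost x p o = q (xC [set o in s]) - 2 * dot x (xC [set o in s]).
Proof.
move=> Hc Hu; rewrite xC_chain // q_chain // dot_chain.
have := closed_walk_telescope p Hc.
by rewrite /rcost sumrB big_split /= sumrB -mulr_sumr; lra.
Qed.

Lemma tight_arcs_potential x : VO x -> exists p : V -> R,
  (forall o, 0 <= rcost x p o) /\ forall o, o \in tight_arcs x -> rcost x p o = 0.
Proof.
move/VO_circuit_ineqs/circuit_ineqs_potential => [p Hp].
have Hrc o : 0 <= rcost x p o by have := Hp o; rewrite /rcost; lra.
exists p; split => // o /tight_arcsP [C [HC /eqP Ht Ho]].
have [s [Hc Hu Es]] := circuit_walk HC; subst C.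
apply: (psum_seq_eq0 (l := s)) => //; last by move: Ho; rewrite inE.
by rewrite rcost_circuit // Ht subrr.
Qed.

Lemma tight_arcs_circuit x C : is_circuit t h C -> tight x C -> C \subset tight_arcs x.
Proof. by move=> HC Ht; apply/subsetP => o Ho; apply/tight_arcsP; exists C. Qed.

(* The tight arcs form a strongly connected orientation: the two orientations
   of an edge have reduced costs adding up to 2. *)
Lemma tight_arcs_strongly_connected x : VO x -> strongly_connected t h (tight_arcs x).
Proof.
case/tight_arcs_potential => p [_ Hrc]; apply: strongly_connectedP.
  move=> e; apply/negP => /andP[/Hrc H1 /Hrc H2]; move: H1 H2.
  by rewrite /rcost /Defs.oval /Defs.otail /Defs.ohead /=; lra.
move=> o /tight_arcsP [C [HC Ht Ho]].
have [s [Hc Hu Es]] := circuit_walk HC; subst C; move: Ho; rewrite inE => Ho.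
apply: (closed_walk_reach Hc) Ho => o' Ho'; apply: connect1; apply: dirrel_arc.
by apply: (subsetP (tight_arcs_circuit HC Ht)); rewrite inE.
Qed.

Lemma tight_arcs_vD x : VO x -> is_vD t h (tight_arcs x) x.
Proof.
move=> Hx; have [p [_ Hrc]] := tight_arcs_potential Hx; split; first exact: Hx.1.
move=> C HC Hsub; have [s [Hc Hu Es]] := circuit_walk HC; subst C.
have := rcost_circuit x p Hc Hu; rewrite big_seq big1 => [|o Ho]; first lra.
by apply: Hrc; apply: (subsetP Hsub); rewrite inE.
Qed.

Definition tight_on (D : {set arc}) (x : vec) : Prop :=
  forall C, is_circuit t h C -> C \subset D -> 2 * dot x (xC C) = q (xC C).

Lemma tight_arcs_sub D x : strongly_connected t h D -> tight_on D x -> D \subset tight_arcs x.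
Proof.
move=> HD HDt; apply/subsetP => o Ho; have [s [Hc Ha Hu]] := arc_on_circuit HD Ho.
have HC := circuit_of_walk Hc Hu.
apply: (subsetP (tight_arcs_circuit HC _)); last by rewrite inE mem_head.
by apply/eqP; apply: HDt => //; apply/subsetP => o'; rewrite inE => /(allP Ha).
Qed.

End TightArcs.

Section FaceFD.
Variables (V E : finType) (t h : E -> V) (R : realFieldType).
Notation arc := (E * bool)%type.
Notation vec := {ffun E -> R}.
Notation dot := (@dot E R).
Notation q := (@q E R).
Notation is_flow := (@is_flow V E t h R).
Notation xC := (@xC E R).
Notation VO := (@VO V E t h R).
Notation FD := (@FD V E t h R).
Notation tight := (@tight E R).
Notation circuitb := (circuitb t h).
Notation tight_arcs := (tight_arcs t h).
Notation tight_on := (tight_on t h).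

(* V_O is convex, being cut out by linear constraints. *)
Lemma conv_VO (P : vec -> Prop) x : (forall y, P y -> VO y) -> conv P x -> VO x.
Proof.
move=> HP Hx; apply/VO_circuitsP; split.
  apply/flow_dotP => v; apply: (conv_dot Hx) => y /HP [/flow_dotP Hy _]; exact: Hy.
move=> C HC; suff : dot x (xC C) <= q (xC C) / 2 by lra.
apply: (conv_dot_le Hx) => y /HP /VO_circuit_ineqs /(_ C HC); lra.
Qed.

Lemma FD_VO D x : FD D x -> VO x.
Proof. by apply: conv_VO => y [D' [[HS HG _] Hy]]; exact: vD_VO HS HG Hy. Qed.

Lemma FD_tight D x : FD D x -> tight_on D x.
Proof.
move=> Hx C HC Hsub; suff : dot x (xC C) = q (xC C) / 2 by lra.
apply: (conv_dot Hx) => y [D' [[_ _ HDD'] Hy]].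
by have := Hy.2 C HC (subset_trans Hsub HDD'); lra.
Qed.

Lemma covered_in_FD D x : strongly_connected t h D -> VO x -> tight_on D x ->
  (forall e, ~~ bridge t h e -> covers (tight_arcs x) e) -> FD D x.
Proof.
move=> HD Hx HDt Hcov; apply: conv_pt; exists (tight_arcs x); split; last exact: tight_arcs_vD.
have HS := tight_arcs_strongly_connected Hx.
split => //; last exact: tight_arcs_sub.
exact: orientation_of_Gcirc_full.
Qed.

(* Otherwise, project the chain of a circuit through an uncovered edge e0
   away from the tight circuits; the result is a flow, still nonzero on e0. *)
Lemma uncovered_direction x e0 : ~~ bridge t h e0 -> ~~ covers (tight_arcs x) e0 ->
  exists d : vec,
    [/\ is_flow d, d e0 != 0 & forall C, is_circuit t h C -> tight x C -> dot d (xC C) = 0].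
Proof.
move=> Hb0 Hc0; have [s0 [Hc0' Hu0 _]] := non_bridge_on_circuit (o := (e0, true)) Hb0.
pose l := map xC (enum [set C | circuitb C && tight x C]).
have Hl u : u \in l -> exists C, [/\ is_circuit t h C, tight x C & u = xC C].
  by case/mapP => C; rewrite mem_enum inE => /andP[/asboolP HC Ht] ->; exists C.
have [w [Hw Hwo]] := orth_projection l (chain R ((e0, true) :: s0)).
exists (subc (chain R ((e0, true) :: s0)) w); split.
- apply: flowB; first exact: chain_flow.
  by apply: (in_span_flow _ Hw) => u /Hl [C [HC _ ->]]; exact: circuit_flow.
- (* the tight circuits, hence w, vanish on e0 *)
  have Hw0 : w e0 = 0.
    apply: (Hw (fun w => w e0 = 0)); rewrite ?ffunE //.
    - by move=> a b Ha Hb; rewrite ffunE Ha Hb addr0.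
    - by move=> k a Ha; rewrite ffunE Ha mulr0.
    move=> u /Hl [C [HC Ht ->]]; rewrite ffunE.
    have Hn b : (e0, b) \notin C.
      apply/negP => Hin; have : (e0, b) \in tight_arcs x by apply/tight_arcsP; exists C.
      by case: b Hin => _ HS; move: Hc0; rewrite /covers HS ?orbT.
    by rewrite (negbTE (Hn true)) (negbTE (Hn false)).
  by rewrite ffunE Hw0 subr0 (chain_on_walk R (o := (e0, true)) Hu0) ?mem_head // /sgn oner_neq0.
- move=> C HC Ht; apply: Hwo; apply: map_f; rewrite mem_enum inE Ht andbT.
  exact/asboolP.
Qed.

Definition num_slack (x : vec) : nat := #|[set C | circuitb C && ~~ tight x C]|.

Lemma num_slack_lt (x z : vec) C0 :
  (forall C, is_circuit t h C -> tight x C -> tight z C) ->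
  is_circuit t h C0 -> ~~ tight x C0 -> tight z C0 -> (num_slack z < num_slack x)%N.
Proof.
move=> Hz HC0 Hn0 Ht0; apply: proper_card; apply/properP; split.
  apply/subsetP => C; rewrite !inE => /andP[Hcb Hnt]; rewrite Hcb /=.
  by apply: contra Hnt => Ht; apply: Hz => //; apply/asboolP.
by exists C0; rewrite !inE ?Ht0 ?andbF // Hn0 andbT; apply/asboolP.
Qed.

(* Descent step: unless x is some v^{D'}, it is a convex combination of two
   points of V_O, tight on D, with strictly more tight circuits. *)
Lemma descent_step D x : strongly_connected t h D ->
  (forall y, VO y -> tight_on D y -> (num_slack y < num_slack x)%N -> FD D y) ->
  VO x -> tight_on D x -> FD D x.
Proof.
move=> HD IH Hx HDt.
case: (classic (forall e, ~~ bridge t h e -> covers (tight_arcs x) e)) => [Hcov|Hncov].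
  exact: covered_in_FD.
have [e0 [Hb0 Hc0]] : exists e0, ~~ bridge t h e0 /\ ~~ covers (tight_arcs x) e0.
  apply: NNPP => Hn; apply: Hncov => e Hb; apply/negPn/negP => Hc; apply: Hn; by exists e.
have [d [Hdf Hd0 Hdorth]] := uncovered_direction Hb0 Hc0.
have further (dd : vec) : is_flow dd -> dd e0 != 0 ->
    (forall C, is_circuit t h C -> tight x C -> dot dd (xC C) = 0) ->
    exists2 tau, 0 < tau & FD D (x + scalev tau dd).
  move=> Hf H0 Horth; have := move_to_new_tight Hx Hf Horth (positive_circuit Hf H0).
  case=> tau [Htau HV Hti [C1 [HC1 Hn1 Ht1]]]; exists tau => //.
  apply: IH => //; last exact: num_slack_lt Hti HC1 Hn1 Ht1.
  by move=> C HC Hsub; apply/eqP; apply: Hti => //; apply/eqP; apply: HDt.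
have [tau1 Ht1 F1] := further d Hdf Hd0 Hdorth.
have [tau2 Ht2 F2] : exists2 tau, 0 < tau & FD D (x + scalev tau (scalev (-1) d)).
  apply: further; first exact: flowZ.
    by rewrite ffunE mulN1r oppr_eq0.
  by move=> C HC Ht; rewrite dotZl Hdorth // mulr0.
pose k := tau2 / (tau1 + tau2).
have Hk0 : 0 <= k by rewrite divr_ge0 // ltW // addr_gt0.
have Hk1 : k <= 1 by rewrite ler_pdivrMr ?addr_gt0 // mul1r lerDr ltW.
have Hcomb := conv_comb F1 F2 Hk0 Hk1.
suff Ex : x = [ffun e => k * (x + scalev tau1 d) e +
                         (1 - k) * (x + scalev tau2 (scalev (-1) d)) e].
  by rewrite {1}Ex.
apply/ffunP => e; rewrite !ffunE /k; field.
by rewrite gt_eqF // addr_gt0.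
Qed.

Lemma tight_on_FD D x : strongly_connected t h D -> VO x -> tight_on D x -> FD D x.
Proof.
move=> HD; have [n Hn] := ubnP (num_slack x); elim: n x Hn => // n IHn x Hn Hx HDt.
by apply: descent_step => // y Hy HDy Hlt; apply: IHn Hy HDy; lia.
Qed.

(* F_D is the face of V_O cut out by the sum of the circuit inequalities of
   the circuits inside D. *)
Lemma FD_face D : strongly_connected t h D -> is_face VO (FD D).
Proof.
move=> HD; pose Cs := [set C : {set arc} | circuitb C && (C \subset D)].
pose a : vec := [ffun e => \sum_(C in Cs) xC C e].
have Hda x : dot a x = \sum_(C in Cs) dot (xC C) x.
  rewrite /Defs.dot; under eq_bigr do rewrite ffunE mulr_suml.
  by rewrite exchange_big.
have Hslack x : VO x -> forall C, C \in Cs -> 0 <= q (xC C) / 2 - dot (xC C) x.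
  move=> Hx C; rewrite inE => /andP[/asboolP HC _].
  by have := VO_circuit_ineqs Hx HC; rewrite dotC; lra.
exists a, (\sum_(C in Cs) q (xC C) / 2); split.
  by move=> x Hx; rewrite Hda -subr_ge0 -sumrB; apply: sumr_ge0; exact: Hslack.
move=> x; split => [Hx|[Hx Heq]].
  split; first exact: FD_VO Hx.
  rewrite Hda; apply: eq_bigr => C; rewrite inE => /andP[/asboolP HC Hsub].
  by have := FD_tight Hx HC Hsub; rewrite dotC; lra.
apply: tight_on_FD => // C HC Hsub.
have HCs : C \in Cs by rewrite inE Hsub andbT; apply/asboolP.
have Hs0 : \sum_(C in Cs) (q (xC C) / 2 - dot (xC C) x) = 0.
  by rewrite sumrB -Hda Heq subrr.
by have := psumr_eq0P (Hslack x Hx) Hs0 HCs; rewrite dotC; lra.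
Qed.

End FaceFD.

Section Phi.
Variables (V E : finType) (t h : E -> V) (R : realFieldType).
Notation arc := (E * bool)%type.
Notation FD := (@FD V E t h R).
Notation xC := (@xC E R).

(* Every arc of D lies on a circuit of D, which is tight on F_D. *)
Lemma arc_in_phi (D : {set arc}) o : strongly_connected t h D -> o \in D -> phi t h (FD D) o.
Proof.
move=> HD Ho; have [s [Hc Ha Hu]] := arc_on_circuit HD Ho.
have HC := circuit_of_walk Hc Hu.
exists (xC [set o' in o :: s]); split.
- by exists [set o' in o :: s].
- move=> x Hx; split; first exact: (FD_VO Hx).1.
  by apply: (FD_tight Hx HC); apply/subsetP => o'; rewrite inE => /(allP Ha).
- by rewrite xC_chain // oval_chain // mem_head.
Qed.

(* A circuit C through an arc o outside D is not tight on F_D: at v^{D'} for a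
   D' in S_D containing the reverse of o, <x^{D'}, x^C> < q(x^C). *)
Lemma phi_sub (D : {set arc}) o : strongly_connected t h D -> phi t h (FD D) o -> o \in D.
Proof.
move=> HD [_ [[C [HC ->]] HF Hpos]]; apply: contraT => HnD.
have Hb := circuit_no_bridge HC (xC_pos Hpos).
have [D' HD' Hr] := reverse_in_SD HD HnD Hb; have [HS' HG' _] := HD'.
have [v Hv] := vD_exists t h R HS'.1.
have [_ Htight] : Hlam t h (xC C) v by apply: HF; apply: conv_pt; exists D'.
have := vD_pairing HS' HG' Hv (circuit_flow R HC); have := dot_xC_lt HS'.1 Hr Hpos.
by rewrite dotC; lra.
Qed.

End Phi.

Theorem mainTheorem9 (R : realFieldType) (V E : finType) (t h : E -> V)
  (Gconn : graph_connected t h) (D : {set E * bool})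
  (HD : strongly_connected t h D) :
  [/\ (forall D', in_SD t h D D' -> exists! v : {ffun E -> R}, is_vD t h D' v),
      is_face (VO t h (R := R)) (FD t h (R := R) D)
    & forall o : E * bool, o \in D <-> phi t h (FD t h (R := R) D) o].
Proof.
split.
- move=> D' [HS' HG' _]; have [v Hv] := vD_exists t h R HS'.1.
  by exists v; split => // v' Hv'; exact: vD_unique HS' HG' Hv Hv'.
- exact: FD_face.
- by move=> o; split; [exact: arc_in_phi | exact: phi_sub].
Qed.
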